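(* Let $f:M\to N$ be a proximity morphism of MT-algebras. Then (1) $f$ is an isomorphism in $\mathbf{MT_P}$ iff $f|_{\mathcal O M}:\mathcal O M\to\mathcal O N$ is an isomorphism of frames; (2) $f$ is a monomorphism in $\mathbf{MT_P}$ iff $f|_{\mathcal O M}$ is a monomorphism in $\mathbf{Frm}$; (3) $f$ is an epimorphism in $\mathbf{MT_P}$ iff $f|_{\mathcal O M}$ is an epimorphism in $\mathbf{Frm}$.
   Context: An MT-algebra is a pair $(M,\square)$ where $M$ is a complete boolean algebra and $\square:M\to M$ satisfies $\square 1=1$, $\square(a\wedge b)=\square a\wedge\square b$, $\square a\le a$, $\square a\le\square\square a$; $\Diamond a=\neg\square\neg a$; open: $\square a=a$; locally closed: $a=\square b\wedge\Diamond c$; $\mathcal O M$, $\mathcal{LC}M$ the sets of open and locally closed elements ($\mathcal O M$ is a frame). A proximity morphism $f:M\to N$ is a map with (P1) $f|_{\mathcal O M}:\mathcal O M\to\mathcal O N$ a frame morphism; (P2) $f(a\wedge b)=f(a)\wedge f(b)$; (P3) $f(\bigvee S)=\bigvee f[S]$ for finite $S\subseteq\mathcal{LC}M$; (P4) $f(a)=\bigvee\{f(x):x\in\mathcal{LC}M, x\le a\}$. $\mathbf{MT_P}$ is the category of MT-algebras and proximity morphisms with composition $(g\star f)(a)=\bigvee\{g(f(x)):x\in\mathcal{LC}M_1,x\le a\}$ and identities $1_M(a)=\bigvee\{x\in\mathcal{LC}M:x\le a\}$. $\mathbf{Frm}$ is the category of frames and frame morphisms. *)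

From Stdlib Require Import List ProofIrrelevance.
Set Implicit Arguments.

Record CBA : Type := {
  cb_car :> Type;
  cb_le : cb_car -> cb_car -> Prop;
  cb_meet : cb_car -> cb_car -> cb_car;
  cb_join : cb_car -> cb_car -> cb_car;
  cb_top : cb_car;
  cb_bot : cb_car;
  cb_neg : cb_car -> cb_car;
  cb_sup : (cb_car -> Prop) -> cb_car;
  cb_refl : forall a, cb_le a a;
  cb_trans : forall a b c, cb_le a b -> cb_le b c -> cb_le a c;
  cb_antisym : forall a b, cb_le a b -> cb_le b a -> a = b;
  cb_meet_l : forall a b, cb_le (cb_meet a b) a;
  cb_meet_r : forall a b, cb_le (cb_meet a b) b;
  cb_meet_univ : forall a b c, cb_le c a -> cb_le c b -> cb_le c (cb_meet a b);
  cb_join_l : forall a b, cb_le a (cb_join a b);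
  cb_join_r : forall a b, cb_le b (cb_join a b);
  cb_join_univ : forall a b c, cb_le a c -> cb_le b c -> cb_le (cb_join a b) c;
  cb_top_ge : forall a, cb_le a cb_top;
  cb_bot_le : forall a, cb_le cb_bot a;
  cb_sup_ub : forall (S : cb_car -> Prop) x, S x -> cb_le x (cb_sup S);
  cb_sup_least : forall (S : cb_car -> Prop) c,
      (forall x, S x -> cb_le x c) -> cb_le (cb_sup S) c;
  cb_distr : forall a b c,
      cb_meet a (cb_join b c) = cb_join (cb_meet a b) (cb_meet a c);
  cb_compl_meet : forall a, cb_meet a (cb_neg a) = cb_bot;
  cb_compl_join : forall a, cb_join a (cb_neg a) = cb_top;
  (* infinite distributivity: a theorem for every complete boolean algebra,
     included for convenience (redundant) *)
  cb_inf_distr : forall a (S : cb_car -> Prop),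
      cb_meet a (cb_sup S) = cb_sup (fun y => exists x, S x /\ y = cb_meet a x)
}.
Arguments cb_le {_} _ _.
Arguments cb_meet {_} _ _.
Arguments cb_join {_} _ _.
Arguments cb_top {_}.
Arguments cb_bot {_}.
Arguments cb_neg {_} _.
Arguments cb_sup {_} _.

Record MTAlg : Type := {
  mt_cba :> CBA;
  box : mt_cba -> mt_cba;
  box_top : box cb_top = cb_top;
  box_meet : forall a b, box (cb_meet a b) = cb_meet (box a) (box b);
  box_le : forall a, cb_le (box a) a;
  box_4 : forall a, cb_le (box a) (box (box a))
}.
Arguments box {_} _.

Definition dia {M : MTAlg} (a : M) : M := cb_neg (box (cb_neg a)).
Definition is_open {M : MTAlg} (a : M) : Prop := box a = a.
Definition is_LC {M : MTAlg} (a : M) : Prop :=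
  exists b c : M, a = cb_meet (box b) (dia c).

Definition img {A B : Type} (f : A -> B) (S : A -> Prop) : B -> Prop :=
  fun y => exists x, S x /\ y = f x.

Record Frame : Type := {
  fr_car :> Type;
  fr_le : fr_car -> fr_car -> Prop;
  fr_meet : fr_car -> fr_car -> fr_car;
  fr_top : fr_car;
  fr_sup : (fr_car -> Prop) -> fr_car;
  fr_refl : forall a, fr_le a a;
  fr_trans : forall a b c, fr_le a b -> fr_le b c -> fr_le a c;
  fr_antisym : forall a b, fr_le a b -> fr_le b a -> a = b;
  fr_meet_l : forall a b, fr_le (fr_meet a b) a;
  fr_meet_r : forall a b, fr_le (fr_meet a b) b;
  fr_meet_univ : forall a b c, fr_le c a -> fr_le c b -> fr_le c (fr_meet a b);
  fr_top_ge : forall a, fr_le a fr_top;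
  fr_sup_ub : forall (S : fr_car -> Prop) x, S x -> fr_le x (fr_sup S);
  fr_sup_least : forall (S : fr_car -> Prop) c,
      (forall x, S x -> fr_le x c) -> fr_le (fr_sup S) c;
  fr_distr : forall a (S : fr_car -> Prop),
      fr_meet a (fr_sup S) = fr_sup (fun y => exists x, S x /\ y = fr_meet a x)
}.
Arguments fr_le {_} _ _.
Arguments fr_meet {_} _ _.
Arguments fr_top {_}.
Arguments fr_sup {_} _.

Definition frame_hom {F G : Frame} (h : F -> G) : Prop :=
  (forall a b, h (fr_meet a b) = fr_meet (h a) (h b)) /\
  h fr_top = fr_top /\
  (forall S : F -> Prop, h (fr_sup S) = fr_sup (img h S)).

Definition frame_iso {F G : Frame} (h : F -> G) : Prop :=
  frame_hom h /\
  exists g : G -> F, frame_hom g /\ (forall x, g (h x) = x) /\ (forall y, h (g y) = y).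

Definition frame_mono {F G : Frame} (h : F -> G) : Prop :=
  forall (E : Frame) (g1 g2 : E -> F), frame_hom g1 -> frame_hom g2 ->
    (forall x, h (g1 x) = h (g2 x)) -> forall x, g1 x = g2 x.

Definition frame_epi {F G : Frame} (h : F -> G) : Prop :=
  forall (E : Frame) (g1 g2 : G -> E), frame_hom g1 -> frame_hom g2 ->
    (forall x, g1 (h x) = g2 (h x)) -> forall y, g1 y = g2 y.

Section OpenFrame.
Variable M : MTAlg.

Lemma cb_sup_ext (S T : M -> Prop) : (forall x, S x <-> T x) -> cb_sup S = cb_sup T.
Proof.
  intros H; apply cb_antisym; apply cb_sup_least; intros x Hx;
  apply cb_sup_ub; apply H; exact Hx.
Qed.

Lemma box_mono (a b : M) : cb_le a b -> cb_le (box a) (box b).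
Proof.
  intros H.
  assert (E : cb_meet a b = a).
  { apply cb_antisym. apply cb_meet_l. apply cb_meet_univ; [apply cb_refl | exact H]. }
  rewrite <- E, box_meet. apply cb_meet_r.
Qed.

Lemma open_meet (a b : M) : is_open a -> is_open b -> is_open (cb_meet a b).
Proof. unfold is_open; intros Ha Hb; rewrite box_meet, Ha, Hb; reflexivity. Qed.

Lemma open_top : is_open (@cb_top M).
Proof. apply box_top. Qed.

Lemma open_sup (S : M -> Prop) : (forall x, S x -> is_open x) -> is_open (cb_sup S).
Proof.
  intros H; unfold is_open; apply cb_antisym. apply box_le.
  apply cb_sup_least; intros x Hx. pose proof (H x Hx) as Ex; unfold is_open in Ex.
  apply cb_trans with (box x). rewrite Ex; apply cb_refl.
  apply box_mono, cb_sup_ub; exact Hx.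
Qed.

Definition Op : Type := { a : M | is_open a }.

Definition op_le (x y : Op) : Prop := cb_le (proj1_sig x) (proj1_sig y).
Definition op_meet (x y : Op) : Op :=
  exist _ (cb_meet (proj1_sig x) (proj1_sig y)) (open_meet (proj2_sig x) (proj2_sig y)).
Definition op_top : Op := exist _ cb_top open_top.
Definition op_supset (S : Op -> Prop) : M -> Prop :=
  fun a => exists x, S x /\ a = proj1_sig x.
Lemma op_supset_open (S : Op -> Prop) x : op_supset S x -> is_open x.
Proof. intros [y [_ ->]]; exact (proj2_sig y). Qed.
Definition op_sup (S : Op -> Prop) : Op :=
  exist _ (cb_sup (op_supset S)) (@open_sup (op_supset S) (@op_supset_open S)).

Lemma op_eq (x y : Op) : proj1_sig x = proj1_sig y -> x = y.
Proof.
  destruct x as [x Hx], y as [y Hy]; simpl; intros ->.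
  f_equal; apply proof_irrelevance.
Qed.

Definition OFrame : Frame.
Proof.
  refine {| fr_car := Op; fr_le := op_le; fr_meet := op_meet; fr_top := op_top;
            fr_sup := op_sup |}; unfold op_le; simpl.
  - intros; apply cb_refl.
  - intros a b c; apply cb_trans.
  - intros a b H1 H2; apply op_eq, cb_antisym; assumption.
  - intros; apply cb_meet_l.
  - intros; apply cb_meet_r.
  - intros; apply cb_meet_univ; assumption.
  - intros; apply cb_top_ge.
  - intros S x Hx; apply cb_sup_ub; exists x; split; auto.
  - intros S c H; apply cb_sup_least; intros y [x [Hx ->]]; apply H; exact Hx.
  - intros a S; apply op_eq; simpl. rewrite cb_inf_distr.
    apply cb_sup_ext; intros y; split.
    + intros [z [[x [Hx ->]] ->]]. exists (op_meet a x); split; [|reflexivity].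
      exists x; split; auto.
    + intros [w [[x [Hx ->]] ->]]. simpl. exists (proj1_sig x); split; [|reflexivity].
      exists x; split; auto.
Defined.

End OpenFrame.

Definition restrO {M N : MTAlg} (f : M -> N)
  (H : forall a : M, is_open a -> is_open (f a)) : OFrame M -> OFrame N :=
  fun x => exist _ (f (proj1_sig x)) (H _ (proj2_sig x)).

Record proximity {M N : MTAlg} (f : M -> N) : Prop := {
  px_open : forall a : M, is_open a -> is_open (f a);
  px_frame : frame_hom (restrO f px_open);
  px_meet : forall a b : M, f (cb_meet a b) = cb_meet (f a) (f b);
  (* (P3): finite subsets of LC M, given as lists *)
  px_lcjoin : forall l : list M, (forall x, In x l -> is_LC x) ->
      f (cb_sup (fun x => In x l)) = cb_sup (img f (fun x => In x l));
  px_lc : forall a : M,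
      f a = cb_sup (img f (fun x => is_LC x /\ cb_le x a))
}.

Definition starc {M1 M2 M3 : MTAlg} (g : M2 -> M3) (f : M1 -> M2) (a : M1) : M3 :=
  cb_sup (img (fun x => g (f x)) (fun x => is_LC x /\ cb_le x a)).

Definition idP (M : MTAlg) (a : M) : M :=
  cb_sup (fun x => is_LC x /\ cb_le x a).

Definition MTP_iso {M N : MTAlg} (f : M -> N) : Prop :=
  proximity f /\
  exists g : N -> M, proximity g /\
    (forall a, starc g f a = idP M a) /\ (forall b, starc f g b = idP N b).

Definition MTP_mono {M N : MTAlg} (f : M -> N) : Prop :=
  forall (L : MTAlg) (g1 g2 : L -> M), proximity g1 -> proximity g2 ->
    (forall a, starc f g1 a = starc f g2 a) -> forall a, g1 a = g2 a.

Definition MTP_epi {M N : MTAlg} (f : M -> N) : Prop :=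
  forall (L : MTAlg) (g1 g2 : N -> L), proximity g1 -> proximity g2 ->
    (forall a, starc g1 f a = starc g2 f a) -> forall b, g1 b = g2 b.

From Stdlib Require Import List ProofIrrelevance FunctionalExtensionality.
From Stdlib Require Import PropExtensionality Classical.

Set Implicit Arguments.

(* Locally closed elements are differences u /\ ~v of nested opens, and proximity
   morphisms preserve such differences; so a proximity morphism is determined by its
   restriction to opens, and on opens the composition of MT_P is ordinary
   composition.  Conversely every frame map O N -> O M extends to a proximity
   morphism, sending a to the join of all h u /\ ~h v with u /\ ~v <= a.  Thus
   restriction to opens is a full and faithful functor MT_P -> Frm, which reflects
   isomorphisms, monomorphisms and epimorphisms.  To see that it also preserves monos
   and epis, every frame E is reached by test objects: the frame of opens of the
   Alexandrov MT-algebra of down-sets of E retracts onto E by taking joins; and for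
   each b in E, the nucleus x |-> (x -> b) -> b maps E onto the complete boolean
   algebra of its fixed points, the frame of opens of itself under the trivial
   interior operator; since the nucleus is inflationary and fixes b, equality of the
   two composites for b := g2 y forces g1 y <= g2 y. *)

Ltac cba_le :=
  solve [ apply cb_refl | assumption | apply cb_bot_le | apply cb_top_ge
  | apply cb_meet_univ; cba_le
  | apply cb_join_univ; cba_le
  | eapply cb_trans; [apply cb_meet_l | cba_le]
  | eapply cb_trans; [apply cb_meet_r | cba_le]
  | eapply cb_trans; [ | apply cb_join_l ]; cba_le
  | eapply cb_trans; [ | apply cb_join_r ]; cba_le ].

Section CBATheory.
Context {B : CBA}.
Implicit Types a b c x y z : B.

Lemma cb_meet_comm a b : cb_meet a b = cb_meet b a.
Proof. apply cb_antisym; cba_le. Qed.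

Lemma cb_meet_of_le a b : cb_le a b -> cb_meet a b = a.
Proof. intros; apply cb_antisym; cba_le. Qed.

Lemma cb_distr_r a b c : cb_meet (cb_join b c) a = cb_join (cb_meet b a) (cb_meet c a).
Proof.
  rewrite cb_meet_comm, cb_distr, (cb_meet_comm a b), (cb_meet_comm a c); reflexivity.
Qed.

Lemma cb_meet_neg_le a z : cb_le (cb_meet a (cb_neg a)) z.
Proof. rewrite cb_compl_meet; apply cb_bot_le. Qed.

Lemma cb_neg_meet_le a z : cb_le (cb_meet (cb_neg a) a) z.
Proof. rewrite cb_meet_comm; apply cb_meet_neg_le. Qed.

Lemma cb_le_cases x c z :
  cb_le (cb_meet x c) z -> cb_le (cb_meet x (cb_neg c)) z -> cb_le x z.
Proof.
  intros H1 H2. apply cb_trans with (cb_meet x (cb_join c (cb_neg c))).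
  - rewrite cb_compl_join; cba_le.
  - rewrite cb_distr; cba_le.
Qed.

Lemma cb_shunt a b c : cb_le (cb_meet a (cb_neg c)) b <-> cb_le a (cb_join b c).
Proof.
  split; intros H.
  - apply cb_le_cases with c; [cba_le | eapply cb_trans; [exact H | cba_le]].
  - apply cb_trans with (cb_meet (cb_join b c) (cb_neg c)); [cba_le |].
    rewrite cb_distr_r. apply cb_join_univ; [cba_le | apply cb_meet_neg_le].
Qed.

Lemma cb_neg_involutive a : cb_neg (cb_neg a) = a.
Proof.
  apply cb_antisym.
  - apply cb_le_cases with a; [cba_le | apply cb_neg_meet_le].
  - apply cb_le_cases with (cb_neg a); [apply cb_meet_neg_le | cba_le].
Qed.

Lemma cb_neg_antitone a b : cb_le a b -> cb_le (cb_neg b) (cb_neg a).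
Proof.
  intros H; apply cb_le_cases with a; [| cba_le].
  apply cb_trans with (cb_meet (cb_neg b) b); [cba_le | apply cb_neg_meet_le].
Qed.

Lemma cb_neg_join a b : cb_neg (cb_join a b) = cb_meet (cb_neg a) (cb_neg b).
Proof.
  apply cb_antisym.
  - apply cb_meet_univ; apply cb_neg_antitone; cba_le.
  - apply cb_le_cases with (cb_join a b); [| cba_le].
    rewrite cb_distr; apply cb_join_univ.
    + apply cb_trans with (cb_meet (cb_neg a) a); [cba_le | apply cb_neg_meet_le].
    + apply cb_trans with (cb_meet (cb_neg b) b); [cba_le | apply cb_neg_meet_le].
Qed.

Lemma cb_neg_bot : cb_neg (@cb_bot B) = cb_top.
Proof.
  apply cb_antisym; [cba_le |]. apply cb_le_cases with cb_bot; cba_le.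
Qed.

Lemma cb_neg_top : cb_neg (@cb_top B) = cb_bot.
Proof.
  apply cb_antisym; [| cba_le].
  apply cb_trans with (cb_meet (cb_neg (@cb_top B)) cb_top); [cba_le | apply cb_neg_meet_le].
Qed.

Lemma cb_diff_of_partition x y z :
  cb_join x y = z -> cb_meet x y = cb_bot -> x = cb_meet z (cb_neg y).
Proof.
  intros Hj Hm. apply cb_antisym.
  - apply cb_meet_univ; [rewrite <- Hj; cba_le |].
    apply cb_le_cases with y; [rewrite Hm; cba_le | cba_le].
  - apply cb_shunt. rewrite Hj; cba_le.
Qed.

Lemma cb_sup_equiv (S T : B -> Prop) : (forall x, S x <-> T x) -> cb_sup S = cb_sup T.
Proof.
  intros H; apply cb_antisym; apply cb_sup_least; intros x Hx;
  apply cb_sup_ub; apply H; exact Hx.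
Qed.

Lemma cb_sup_empty (S : B -> Prop) : (forall x, ~ S x) -> cb_sup S = cb_bot.
Proof.
  intros H; apply cb_antisym; [| cba_le].
  apply cb_sup_least; intros x Hx; destruct (H x Hx).
Qed.

Lemma cb_sup_insert (S : B -> Prop) a :
  cb_sup (fun y => y = a \/ S y) = cb_join a (cb_sup S).
Proof.
  apply cb_antisym.
  - apply cb_sup_least; intros x [-> | Hx]; [cba_le |].
    eapply cb_trans; [apply cb_sup_ub; exact Hx | cba_le].
  - apply cb_join_univ; [apply cb_sup_ub; auto |].
    apply cb_sup_least; intros x Hx; apply cb_sup_ub; auto.
Qed.

Lemma cb_meet_sup_le a (S : B -> Prop) c :
  (forall x, S x -> cb_le (cb_meet a x) c) -> cb_le (cb_meet a (cb_sup S)) c.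
Proof.
  intros H; rewrite cb_inf_distr; apply cb_sup_least; intros y [x [Hx ->]]; auto.
Qed.

Lemma cb_sup_list_cons a l :
  cb_sup (fun x => In x (a :: l)) = cb_join a (cb_sup (fun x => In x l)).
Proof. rewrite <- cb_sup_insert. apply cb_sup_equiv; intros x; simpl; intuition. Qed.

Lemma cb_sup_list_nil : cb_sup (fun x : B => In x nil) = cb_bot.
Proof. apply cb_sup_empty; intros x []. Qed.

End CBATheory.

Lemma cb_sup_img_list_cons (B C : CBA) (f : B -> C) (a : B) l :
  cb_sup (img f (fun x => In x (a :: l))) = cb_join (f a) (cb_sup (img f (fun x => In x l))).
Proof.
  rewrite <- cb_sup_insert. apply cb_sup_equiv; intros y; unfold img; simpl; split.
  - intros [x [[-> | Hx] ->]]; [left; auto | right; eauto].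
  - intros [-> | [x [Hx ->]]]; eauto.
Qed.

Lemma cb_sup_img_list_nil (B C : CBA) (f : B -> C) :
  cb_sup (img f (fun x => In x nil)) = cb_bot.
Proof. apply cb_sup_empty; intros y [x [[] _]]. Qed.

Section MTTheory.
Context {M : MTAlg}.
Implicit Types a u v x : M.

Lemma box_open a : is_open (box a).
Proof. apply cb_antisym; [apply box_le | apply box_4]. Qed.

Lemma box_bot : box (@cb_bot M) = cb_bot.
Proof. apply cb_antisym; [apply box_le | cba_le]. Qed.

Lemma dia_top : dia (@cb_top M) = cb_top.
Proof. unfold dia. rewrite cb_neg_top, box_bot, cb_neg_bot; reflexivity. Qed.

Lemma dia_neg_open u : is_open u -> dia (cb_neg u) = cb_neg u.
Proof. unfold dia; intros H; rewrite cb_neg_involutive, H; reflexivity. Qed.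

Lemma is_LC_open u : is_open u -> is_LC u.
Proof. intros H; exists u, cb_top. rewrite dia_top, H. apply cb_antisym; cba_le. Qed.

Lemma is_LC_diff u v : is_open u -> is_open v -> is_LC (cb_meet u (cb_neg v)).
Proof. intros Hu Hv; exists u, (cb_neg v). rewrite dia_neg_open, Hu; auto. Qed.

(* box b /\ dia c = box b /\ ~(box b /\ box ~c) *)
Lemma is_LC_nested_diff x : is_LC x ->
  exists u v, is_open u /\ is_open v /\ cb_le v u /\ x = cb_meet u (cb_neg v).
Proof.
  intros [b [c ->]]. exists (box b), (cb_meet (box b) (box (cb_neg c))).
  split; [apply box_open |]. split; [apply open_meet; apply box_open |].
  split; [cba_le |]. unfold dia. apply cb_antisym.
  - apply cb_meet_univ; [cba_le |].
    eapply cb_trans; [apply cb_meet_r | apply cb_neg_antitone; cba_le].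
  - apply cb_meet_univ; [cba_le |].
    apply cb_le_cases with (box (cb_neg c)); [| cba_le].
    apply cb_trans with (cb_meet (cb_meet (box b) (box (cb_neg c)))
       (cb_neg (cb_meet (box b) (box (cb_neg c))))); [cba_le | apply cb_meet_neg_le].
Qed.

End MTTheory.

Section ProximityTheory.
Context {M N : MTAlg} {f : M -> N}.
Hypothesis Hf : proximity f.

Lemma proximity_monotone a b : cb_le a b -> cb_le (f a) (f b).
Proof. intros H. rewrite <- (cb_meet_of_le _ _ H), (px_meet Hf). cba_le. Qed.

Lemma proximity_bot : f cb_bot = cb_bot.
Proof.
  pose proof (px_lcjoin Hf nil) as H.
  rewrite cb_sup_list_nil, cb_sup_img_list_nil in H. apply H. intros x [].
Qed.

(* (P3) on the two-element cover {u /\ ~v, v} of u, plus (P2) on its disjointness. *)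
Lemma proximity_diff u v : is_open u -> is_open v -> cb_le v u ->
  f (cb_meet u (cb_neg v)) = cb_meet (f u) (cb_neg (f v)).
Proof.
  intros Hu Hv Hvu. apply cb_diff_of_partition.
  - assert (Hcover : cb_join (cb_meet u (cb_neg v)) (cb_join v cb_bot) = u).
    { apply cb_antisym; [cba_le |].
      apply cb_le_cases with v; [cba_le | eapply cb_trans; [| apply cb_join_l]; cba_le]. }
    pose proof (px_lcjoin Hf (cb_meet u (cb_neg v) :: v :: nil)) as H.
    rewrite !cb_sup_list_cons, !cb_sup_img_list_cons, cb_sup_list_nil,
      cb_sup_img_list_nil, Hcover in H.
    rewrite H by (intros x [<- | [<- | []]]; [apply is_LC_diff | apply is_LC_open]; auto).
    apply cb_antisym; cba_le.
  - rewrite <- (px_meet Hf), <- proximity_bot. f_equal.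
    apply cb_antisym; [| cba_le].
    apply cb_trans with (cb_meet v (cb_neg v)); [cba_le | apply cb_meet_neg_le].
Qed.

End ProximityTheory.

Lemma proximity_eq_of_open (M N : MTAlg) (g1 g2 : M -> N) :
  proximity g1 -> proximity g2 ->
  (forall u, is_open u -> g1 u = g2 u) -> forall a, g1 a = g2 a.
Proof.
  intros H1 H2 Hopen a. rewrite (px_lc H1), (px_lc H2).
  apply cb_sup_equiv; intros y; split; intros [x [[Hx Hxa] ->]];
  exists x; (split; [split; auto |]);
  destruct (is_LC_nested_diff Hx) as [u [v [Hu [Hv [Hvu ->]]]]];
  rewrite (proximity_diff H1), (proximity_diff H2), !Hopen; auto.
Qed.

Section Composition.
Context {A B C : MTAlg}.

Lemma proximity_comp_diff (g : B -> C) (f : A -> B) :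
  proximity g -> proximity f -> forall u v, is_open u -> is_open v -> cb_le v u ->
  g (f (cb_meet u (cb_neg v))) = cb_meet (g (f u)) (cb_neg (g (f v))).
Proof.
  intros Hg Hf u v Hu Hv Hvu.
  rewrite (proximity_diff Hf), (proximity_diff Hg); auto;
  [apply (px_open Hf) | apply (px_open Hf) | apply (proximity_monotone Hf)]; auto.
Qed.

Lemma starc_LC (g : B -> C) (f : A -> B) :
  proximity g -> proximity f -> forall x, is_LC x -> starc g f x = g (f x).
Proof.
  intros Hg Hf x Hx. apply cb_antisym.
  - apply cb_sup_least; intros y [z [[_ Hz] ->]].
    apply (proximity_monotone Hg), (proximity_monotone Hf), Hz.
  - apply cb_sup_ub. exists x; split; [split; [auto | apply cb_refl] | auto].
Qed.

Lemma starc_eq_iff_open (g g' : B -> C) (f f' : A -> B) :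
  proximity g -> proximity g' -> proximity f -> proximity f' ->
  (forall a, starc g f a = starc g' f' a) <->
  (forall u, is_open u -> g (f u) = g' (f' u)).
Proof.
  intros Hg Hg' Hf Hf'. split.
  - intros Hstar u Hu.
    rewrite <- (starc_LC Hg Hf), <- (starc_LC Hg' Hf') by apply (is_LC_open Hu).
    apply Hstar.
  - intros Hopen a. apply cb_sup_equiv.
    assert (HLC : forall x, is_LC x -> g (f x) = g' (f' x)).
    { intros x Hx. destruct (is_LC_nested_diff Hx) as [u [v [Hu [Hv [Hvu ->]]]]].
      rewrite (proximity_comp_diff Hg Hf), (proximity_comp_diff Hg' Hf'), !Hopen; auto. }
    intros y; split; intros [x [[Hx Hxa] ->]]; exists x; rewrite HLC; auto.
Qed.

End Composition.

Lemma idP_LC (A : MTAlg) (x : A) : is_LC x -> idP A x = x.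
Proof.
  intros Hx; apply cb_antisym.
  - apply cb_sup_least; intros y [_ H]; exact H.
  - apply cb_sup_ub; split; [auto | apply cb_refl].
Qed.

Lemma starc_idP_iff_open (A B : MTAlg) (g : B -> A) (f : A -> B) :
  proximity g -> proximity f ->
  (forall a, starc g f a = idP A a) <-> (forall u, is_open u -> g (f u) = u).
Proof.
  intros Hg Hf. split.
  - intros Hstar u Hu. pose proof (is_LC_open Hu) as HLC.
    rewrite <- (starc_LC Hg Hf), Hstar by exact HLC. apply idP_LC, HLC.
  - intros Hopen a. apply cb_sup_equiv.
    assert (HLC : forall x, is_LC x -> g (f x) = x).
    { intros x Hx. destruct (is_LC_nested_diff Hx) as [u [v [Hu [Hv [Hvu ->]]]]].
      rewrite (proximity_comp_diff Hg Hf), !Hopen; auto. }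
    intros y; split.
    + intros [x [[Hx Hxa] ->]]. rewrite HLC; auto.
    + intros [Hy Hya]. exists y; rewrite HLC; auto.
Qed.

Definition op_bot (M : MTAlg) : Op M := op_sup (fun _ => False).
Definition op_join (M : MTAlg) (u v : Op M) : Op M := op_sup (fun w => w = u \/ w = v).

Lemma op_bot_val (M : MTAlg) : proj1_sig (op_bot M) = cb_bot.
Proof. apply cb_sup_empty. intros x [y [[] _]]. Qed.

Lemma op_meet_val (M : MTAlg) (u v : Op M) :
  proj1_sig (op_meet u v) = cb_meet (proj1_sig u) (proj1_sig v).
Proof. reflexivity. Qed.

Lemma op_join_val (M : MTAlg) (u v : Op M) :
  proj1_sig (op_join u v) = cb_join (proj1_sig u) (proj1_sig v).
Proof.
  apply cb_antisym.
  - apply cb_sup_least. intros x [y [[-> | ->] ->]]; cba_le.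
  - apply cb_join_univ; apply cb_sup_ub; [exists u | exists v]; auto.
Qed.

Section Extension.
Context {M N : MTAlg}.
Variable h : OFrame N -> OFrame M.
Hypothesis Hh : frame_hom h.

Let hval (u : Op N) : M := proj1_sig (h u).

Lemma hval_meet u v : hval (op_meet u v) = cb_meet (hval u) (hval v).
Proof. unfold hval. destruct Hh as [Hmeet _]. exact (f_equal _ (Hmeet u v)). Qed.

Lemma hval_sup S : hval (op_sup S) = cb_sup (op_supset (img h S)).
Proof. unfold hval. destruct Hh as [_ [_ Hsup]]. exact (f_equal _ (Hsup S)). Qed.

Lemma hval_monotone (u v : Op N) :
  cb_le (proj1_sig u) (proj1_sig v) -> cb_le (hval u) (hval v).
Proof.
  intros Huv. assert (E : op_meet u v = u) by (apply op_eq, cb_meet_of_le, Huv).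
  rewrite <- E, hval_meet. cba_le.
Qed.

Lemma hval_join u v : hval (op_join u v) = cb_join (hval u) (hval v).
Proof.
  unfold op_join. rewrite hval_sup. apply cb_antisym.
  - apply cb_sup_least. intros x [y [[z [[-> | ->] ->]] ->]]; unfold hval; cba_le.
  - apply cb_join_univ; apply cb_sup_ub; [exists (h u) | exists (h v)];
    (split; [| reflexivity]); [exists u | exists v]; auto.
Qed.

Lemma hval_bot : hval (op_bot N) = cb_bot.
Proof. unfold op_bot. rewrite hval_sup. apply cb_sup_empty. intros x [y [[z [[] _]] _]]. Qed.

Definition prox_ext_piece (a : N) (y : M) : Prop := exists u v : Op N,
  cb_le (cb_meet (proj1_sig u) (cb_neg (proj1_sig v))) a /\
  y = cb_meet (hval u) (cb_neg (hval v)).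

Definition prox_ext (a : N) : M := cb_sup (prox_ext_piece a).

Lemma prox_ext_ge a (u v : Op N) : cb_le (cb_meet (proj1_sig u) (cb_neg (proj1_sig v))) a ->
  cb_le (cb_meet (hval u) (cb_neg (hval v))) (prox_ext a).
Proof. intros Hl; apply cb_sup_ub; exists u, v; auto. Qed.

Lemma prox_ext_least a c :
  (forall u v : Op N, cb_le (cb_meet (proj1_sig u) (cb_neg (proj1_sig v))) a ->
    cb_le (cb_meet (hval u) (cb_neg (hval v))) c) ->
  cb_le (prox_ext a) c.
Proof. intros Hc; apply cb_sup_least; intros y [u [v [Hl ->]]]; auto. Qed.

Lemma prox_ext_monotone a b : cb_le a b -> cb_le (prox_ext a) (prox_ext b).
Proof.
  intros Hab; apply prox_ext_least; intros u v Hl; apply prox_ext_ge; eapply cb_trans; eauto.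
Qed.

Lemma prox_ext_open (w : Op N) : prox_ext (proj1_sig w) = hval w.
Proof.
  apply cb_antisym.
  - apply prox_ext_least; intros u v Hl. apply cb_shunt.
    rewrite <- hval_join. apply hval_monotone. rewrite op_join_val. apply cb_shunt, Hl.
  - eapply cb_trans; [| apply (prox_ext_ge _ w (op_bot N))].
    + rewrite hval_bot, cb_neg_bot. cba_le.
    + rewrite op_bot_val, cb_neg_bot. cba_le.
Qed.

Lemma prox_ext_meet a b : prox_ext (cb_meet a b) = cb_meet (prox_ext a) (prox_ext b).
Proof.
  apply cb_antisym; [apply cb_meet_univ; apply prox_ext_monotone; cba_le |].
  apply cb_meet_sup_le. intros x [u [v [Hl ->]]].
  rewrite cb_meet_comm. apply cb_meet_sup_le. intros y [u' [v' [Hl' ->]]].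
  eapply cb_trans; [| apply (prox_ext_ge _ (op_meet u u') (op_join v v'))].
  - rewrite hval_meet, hval_join, cb_neg_join. cba_le.
  - rewrite op_meet_val, op_join_val, cb_neg_join. apply cb_meet_univ.
    + eapply cb_trans; [| exact Hl']. cba_le.
    + eapply cb_trans; [| exact Hl]. cba_le.
Qed.

Lemma prox_ext_bot : prox_ext cb_bot = cb_bot.
Proof.
  apply cb_antisym; [| cba_le]. apply prox_ext_least; intros u v Hl.
  apply cb_shunt. apply cb_trans with (hval v); [| cba_le]. apply hval_monotone.
  apply cb_trans with (cb_join cb_bot (proj1_sig v)); [apply cb_shunt, Hl | cba_le].
Qed.

(* For x = u0 /\ ~v0, split a piece p /\ ~q <= x \/ y along u0 and v0: the part
   inside u0 /\ ~v0 lies below prox_ext x, the parts outside u0 or inside v0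
   below prox_ext y. *)
Lemma prox_ext_join_LC (x y : N) :
  is_LC x -> cb_le (prox_ext (cb_join x y)) (cb_join (prox_ext x) (prox_ext y)).
Proof.
  intros Hx. destruct (is_LC_nested_diff Hx) as [u0 [v0 [Hu0 [Hv0 [_ ->]]]]].
  set (U := exist is_open u0 Hu0 : Op N). set (V := exist is_open v0 Hv0 : Op N).
  apply prox_ext_least; intros p q Hl.
  assert (Hin : cb_le (cb_meet (hval (op_meet p U)) (cb_neg (hval (op_join q V))))
                      (prox_ext (cb_meet u0 (cb_neg v0)))).
  { apply prox_ext_ge. rewrite op_meet_val, op_join_val, cb_neg_join; cba_le. }
  assert (Hout : cb_le (cb_meet (hval p) (cb_neg (hval (op_join q U)))) (prox_ext y)).
  { apply prox_ext_ge. rewrite op_join_val, cb_neg_join.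
    apply cb_trans with (cb_meet (cb_join (cb_meet u0 (cb_neg v0)) y) (cb_neg u0)).
    { apply cb_meet_univ; [eapply cb_trans; [| exact Hl] |]; cba_le. }
    rewrite cb_distr_r. apply cb_join_univ; [| cba_le].
    apply cb_trans with (cb_meet u0 (cb_neg u0)); [cba_le | apply cb_meet_neg_le]. }
  assert (Hv0in : cb_le (cb_meet (hval (op_meet p V)) (cb_neg (hval q))) (prox_ext y)).
  { apply prox_ext_ge. rewrite op_meet_val.
    apply cb_trans with (cb_meet (cb_join (cb_meet u0 (cb_neg v0)) y) v0).
    { apply cb_meet_univ; [eapply cb_trans; [| exact Hl] |]; cba_le. }
    rewrite cb_distr_r. apply cb_join_univ; [| cba_le].
    apply cb_trans with (cb_meet (cb_neg v0) v0); [cba_le | apply cb_neg_meet_le]. }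
  rewrite hval_meet, hval_join, cb_neg_join in Hin.
  rewrite hval_join, cb_neg_join in Hout. rewrite hval_meet in Hv0in.
  apply cb_le_cases with (hval U).
  - apply cb_le_cases with (hval V).
    + eapply cb_trans; [| apply cb_join_r]. eapply cb_trans; [| exact Hv0in]. cba_le.
    + eapply cb_trans; [| apply cb_join_l]. eapply cb_trans; [| exact Hin]. cba_le.
  - eapply cb_trans; [| apply cb_join_r]. eapply cb_trans; [| exact Hout]. cba_le.
Qed.

Lemma prox_ext_list_join (l : list N) : (forall x, In x l -> is_LC x) ->
  prox_ext (cb_sup (fun x => In x l)) = cb_sup (img prox_ext (fun x => In x l)).
Proof.
  induction l as [| a l IH]; intros HL.
  - rewrite cb_sup_list_nil, cb_sup_img_list_nil. apply prox_ext_bot.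
  - rewrite cb_sup_list_cons, cb_sup_img_list_cons, <- IH by (intros; apply HL; simpl; auto).
    apply cb_antisym.
    + apply prox_ext_join_LC, HL; simpl; auto.
    + apply cb_join_univ; apply prox_ext_monotone; cba_le.
Qed.

Lemma prox_ext_LC_approx (a : N) :
  prox_ext a = cb_sup (img prox_ext (fun x => is_LC x /\ cb_le x a)).
Proof.
  apply cb_antisym.
  - apply prox_ext_least; intros u v Hl.
    apply cb_trans with (prox_ext (cb_meet (proj1_sig u) (cb_neg (proj1_sig v))));
      [apply prox_ext_ge, cb_refl |].
    apply cb_sup_ub. eexists; split; [| reflexivity]. split; [| exact Hl].
    apply is_LC_diff; [exact (proj2_sig u) | exact (proj2_sig v)].
  - apply cb_sup_least; intros y [x [[_ Hx] ->]]; apply prox_ext_monotone, Hx.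
Qed.

End Extension.

Theorem frame_hom_extends (M N : MTAlg) (h : OFrame N -> OFrame M) : frame_hom h ->
  exists g : N -> M, proximity g /\ forall u : Op N, g (proj1_sig u) = proj1_sig (h u).
Proof.
  intros Hh. exists (prox_ext h).
  assert (Hopen : forall a : N, is_open a -> is_open (prox_ext h a)).
  { intros a Ha. change a with (proj1_sig (exist is_open a Ha)).
    rewrite prox_ext_open by exact Hh. exact (proj2_sig _). }
  assert (Hrestr : restrO (prox_ext h) Hopen = h).
  { apply functional_extensionality; intros x. apply op_eq, prox_ext_open, Hh. }
  split; [| intros u; apply prox_ext_open, Hh].
  refine (@Build_proximity N M (prox_ext h) Hopen _ _ _ _).
  - rewrite Hrestr; exact Hh.
  - intros; apply prox_ext_meet, Hh.
  - intros; apply prox_ext_list_join; auto.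
  - intros; apply prox_ext_LC_approx.
Qed.

Section RestrictionToOpens.
Context {M N : MTAlg} {f : M -> N}.
Hypothesis Hf : proximity f.

Let fO : OFrame M -> OFrame N := restrO f (px_open Hf).

Lemma MTP_iso_iff_frame_iso : MTP_iso f <-> frame_iso fO.
Proof.
  split.
  - intros [_ [g [Hg [Hgf Hfg]]]].
    rewrite (starc_idP_iff_open Hg Hf) in Hgf. rewrite (starc_idP_iff_open Hf Hg) in Hfg.
    split; [exact (px_frame Hf) |].
    exists (restrO g (px_open Hg)). split; [exact (px_frame Hg) |].
    split; intros [u Hu]; apply op_eq; simpl; auto.
  - intros [_ [h [Hh [Hhf Hfh]]]]. destruct (frame_hom_extends Hh) as [g [Hg Hgh]].
    split; [exact Hf |]. exists g. split; [exact Hg |].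
    split; [apply (starc_idP_iff_open Hg Hf) | apply (starc_idP_iff_open Hf Hg)];
    intros u Hu.
    + change (f u) with (proj1_sig (fO (exist _ u Hu))). rewrite Hgh, Hhf. reflexivity.
    + change u with (proj1_sig (exist is_open u Hu)) at 1. rewrite Hgh.
      exact (f_equal (@proj1_sig _ _) (Hfh (exist _ u Hu))).
Qed.

Lemma MTP_mono_of_frame_mono : frame_mono fO -> MTP_mono f.
Proof.
  intros Hmono L g1 g2 H1 H2 Hstar. apply (proximity_eq_of_open H1 H2). intros u Hu.
  rewrite (starc_eq_iff_open Hf Hf H1 H2) in Hstar.
  refine (f_equal (@proj1_sig _ _)
    (Hmono (OFrame L) _ _ (px_frame H1) (px_frame H2) _ (exist _ u Hu))).
  intros [v Hv]. apply op_eq, Hstar, Hv.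
Qed.

Lemma MTP_epi_of_frame_epi : frame_epi fO -> MTP_epi f.
Proof.
  intros Hepi L g1 g2 H1 H2 Hstar. apply (proximity_eq_of_open H1 H2). intros u Hu.
  rewrite (starc_eq_iff_open H1 H2 Hf Hf) in Hstar.
  refine (f_equal (@proj1_sig _ _)
    (Hepi (OFrame L) _ _ (px_frame H1) (px_frame H2) _ (exist _ u Hu))).
  intros [v Hv]. apply op_eq, Hstar, Hv.
Qed.

End RestrictionToOpens.

Ltac frm_le :=
  solve [ apply fr_refl | assumption | apply fr_top_ge
  | apply fr_meet_univ; frm_le
  | eapply fr_trans; [apply fr_meet_l | frm_le]
  | eapply fr_trans; [apply fr_meet_r | frm_le] ].

Lemma fr_sup_equiv (E : Frame) (S T : E -> Prop) :
  (forall x, S x <-> T x) -> fr_sup S = fr_sup T.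
Proof.
  intros Hst; apply fr_antisym; apply fr_sup_least; intros x Hx;
  apply fr_sup_ub; apply Hst; exact Hx.
Qed.

Lemma fr_meet_comm (E : Frame) (a b : E) : fr_meet a b = fr_meet b a.
Proof. apply fr_antisym; frm_le. Qed.

Lemma frame_hom_comp (A B C : Frame) (h1 : A -> B) (h2 : B -> C) :
  frame_hom h1 -> frame_hom h2 -> frame_hom (fun x => h2 (h1 x)).
Proof.
  intros [m1 [t1 s1]] [m2 [t2 s2]]. split; [| split].
  - intros a b; rewrite m1, m2; reflexivity.
  - rewrite t1, t2; reflexivity.
  - intros S. rewrite s1, s2. apply fr_sup_equiv. intros y; split.
    + intros [x [[z [Hz ->]] ->]]. exists z; auto.
    + intros [z [Hz ->]]. exists (h1 z); split; auto. exists z; auto.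
Qed.

Lemma pred_ext (X : Type) (S T : X -> Prop) : (forall x, S x <-> T x) -> S = T.
Proof.
  intros Hst; apply functional_extensionality; intros x.
  apply propositional_extensionality; auto.
Qed.

Definition powerset_CBA (X : Type) : CBA.
Proof.
  refine {| cb_car := X -> Prop;
            cb_le := fun S T => forall x, S x -> T x;
            cb_meet := fun S T x => S x /\ T x;
            cb_join := fun S T x => S x \/ T x;
            cb_top := fun _ => True;
            cb_bot := fun _ => False;
            cb_neg := fun S x => ~ S x;
            cb_sup := fun F x => exists T, F T /\ T x |}; simpl.
  all: try solve [intros; apply pred_ext; intros; tauto | firstorder].
  - intros a b Hab Hba; apply pred_ext; split; auto.
  - intros a S; apply pred_ext; intros x; split.
    + intros [Ha [T [HT HTx]]]. exists (fun y => a y /\ T y); split; eauto.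
    + intros [T [[U [HU ->]] [Ha HUx]]]. split; eauto.
Defined.

Definition alexandrov_MT (E : Frame) : MTAlg.
Proof.
  refine {| mt_cba := powerset_CBA E; box := fun S x => forall y, fr_le y x -> S y |}; simpl.
  - apply pred_ext; tauto.
  - intros a b; apply pred_ext; firstorder.
  - intros a x Hx; apply Hx, fr_refl.
  - intros a x Hx y Hy z Hz; apply Hx; eapply fr_trans; eauto.
Defined.

Section Alexandrov.
Variable E : Frame.

Definition down_sup (D : OFrame (alexandrov_MT E)) : E := fr_sup (proj1_sig D).

Lemma alexandrov_open_down_closed (D : OFrame (alexandrov_MT E)) x y :
  proj1_sig D x -> fr_le y x -> proj1_sig D y.
Proof.
  destruct D as [D HD]; simpl. intros Hx Hy. rewrite <- HD in Hx. exact (Hx y Hy).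
Qed.

Lemma down_sup_hom : frame_hom down_sup.
Proof.
  split; [| split]; unfold down_sup.
  - intros D1 D2. apply fr_antisym.
    + apply fr_sup_least. intros x [H1 H2]. apply fr_meet_univ; apply fr_sup_ub; auto.
    + rewrite fr_distr. apply fr_sup_least. intros z [y [Hy ->]].
      rewrite fr_meet_comm, fr_distr. apply fr_sup_least. intros w [x [Hx ->]].
      apply fr_sup_ub. split.
      * apply (alexandrov_open_down_closed D1 x); [auto | apply fr_meet_r].
      * apply (alexandrov_open_down_closed D2 y); [auto | apply fr_meet_l].
  - apply fr_antisym; [apply fr_top_ge | apply fr_sup_ub; exact I].
  - intros S. apply fr_antisym.
    + apply fr_sup_least. intros x [T [[D [HD ->]] HTx]].
      eapply fr_trans; [| apply fr_sup_ub; exists D; split; [exact HD | reflexivity]].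
      apply fr_sup_ub; auto.
    + apply fr_sup_least. intros y [D [HD ->]]. apply fr_sup_least. intros x Hx.
      apply fr_sup_ub. exists (proj1_sig D); split; [exists D; auto | exact Hx].
Qed.

Lemma principal_down_open (x : E) : @is_open (alexandrov_MT E) (fun y => fr_le y x).
Proof.
  apply pred_ext. simpl. intros y; split.
  - intros Hy; apply Hy, fr_refl.
  - intros Hy z Hz; eapply fr_trans; eauto.
Qed.

Lemma down_sup_principal (x : E) : down_sup (exist _ _ (principal_down_open x)) = x.
Proof.
  apply fr_antisym.
  - apply fr_sup_least; auto.
  - apply fr_sup_ub, fr_refl.
Qed.

End Alexandrov.

Lemma frame_mono_of_MTP_mono (M N : MTAlg) (f : M -> N) (Hf : proximity f) :
  MTP_mono f -> frame_mono (restrO f (px_open Hf)).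
Proof.
  intros Hmono E g1 g2 Hg1 Hg2 Heq x.
  destruct (frame_hom_extends (frame_hom_comp (down_sup_hom E) Hg1)) as [G1 [HG1 HG1g]].
  destruct (frame_hom_extends (frame_hom_comp (down_sup_hom E) Hg2)) as [G2 [HG2 HG2g]].
  assert (HG : forall a, G1 a = G2 a).
  { apply (Hmono _ G1 G2 HG1 HG2). apply (starc_eq_iff_open Hf Hf HG1 HG2).
    intros u Hu. change u with (proj1_sig (exist is_open u Hu)). rewrite HG1g, HG2g.
    exact (f_equal (@proj1_sig _ _) (Heq _)). }
  rewrite <- (down_sup_principal E x). apply op_eq. rewrite <- HG1g, <- HG2g. apply HG.
Qed.

Section HeytingImplication.
Context {E : Frame}.
Implicit Types c x y z : E.

Definition frame_imp x c : E := fr_sup (fun z => fr_le (fr_meet z x) c).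

Lemma frame_imp_adj z x c : fr_le z (frame_imp x c) <-> fr_le (fr_meet z x) c.
Proof.
  split.
  - intros Hz. apply fr_trans with (fr_meet (frame_imp x c) x); [frm_le |].
    rewrite fr_meet_comm. unfold frame_imp. rewrite fr_distr. apply fr_sup_least.
    intros w [v [Hv ->]]. rewrite fr_meet_comm. exact Hv.
  - intros Hz. apply fr_sup_ub. exact Hz.
Qed.

Lemma frame_imp_mp x c : fr_le (fr_meet x (frame_imp x c)) c.
Proof. rewrite fr_meet_comm. apply frame_imp_adj, fr_refl. Qed.

Lemma frame_imp_ge x c : fr_le c (frame_imp x c).
Proof. apply frame_imp_adj, fr_meet_l. Qed.

Lemma frame_imp_antitone x y c : fr_le x y -> fr_le (frame_imp y c) (frame_imp x c).
Proof.
  intros Hxy. apply frame_imp_adj.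
  eapply fr_trans; [| apply (frame_imp_mp y c)].
  apply fr_meet_univ; [eapply fr_trans; [apply fr_meet_r | exact Hxy] | apply fr_meet_l].
Qed.

Lemma frame_imp_top_l c : frame_imp fr_top c = c.
Proof.
  apply fr_antisym; [| apply frame_imp_ge].
  eapply fr_trans; [| apply (frame_imp_mp fr_top)]. apply fr_meet_univ; frm_le.
Qed.

Lemma frame_imp_self c : frame_imp c c = fr_top.
Proof. apply fr_antisym; [apply fr_top_ge | apply frame_imp_adj, fr_meet_r]. Qed.

End HeytingImplication.

Section Booleanization.
Context {E : Frame} (b : E).

Definition dneg (x : E) : E := frame_imp (frame_imp x b) b.

Lemma dneg_ext x : fr_le x (dneg x).
Proof. apply frame_imp_adj, frame_imp_mp. Qed.

Lemma dneg_monotone x y : fr_le x y -> fr_le (dneg x) (dneg y).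
Proof. intros; apply frame_imp_antitone, frame_imp_antitone; auto. Qed.

Lemma frame_imp_dneg x : frame_imp (dneg x) b = frame_imp x b.
Proof.
  apply fr_antisym; [apply frame_imp_antitone, dneg_ext |].
  apply frame_imp_adj, (frame_imp_mp (frame_imp x b)).
Qed.

Lemma dneg_idem x : dneg (dneg x) = dneg x.
Proof. unfold dneg at 1. rewrite frame_imp_dneg. reflexivity. Qed.

Lemma dneg_meet x y : dneg (fr_meet x y) = fr_meet (dneg x) (dneg y).
Proof.
  apply fr_antisym.
  - apply fr_meet_univ; apply dneg_monotone; frm_le.
  - apply frame_imp_adj. set (q := frame_imp (fr_meet x y) b).
    assert (Hy : fr_le (fr_meet q x) (frame_imp y b)).
    { apply frame_imp_adj. eapply fr_trans; [| apply (frame_imp_mp (fr_meet x y))].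
      fold q. frm_le. }
    assert (Hx : fr_le (fr_meet q (dneg y)) (frame_imp x b)).
    { apply frame_imp_adj. eapply fr_trans; [| apply (frame_imp_mp (frame_imp y b))].
      apply fr_meet_univ; [eapply fr_trans; [| exact Hy]; frm_le | unfold dneg; frm_le]. }
    eapply fr_trans; [| apply (frame_imp_mp (frame_imp x b))].
    apply fr_meet_univ; [eapply fr_trans; [| exact Hx]; frm_le | unfold dneg; frm_le].
Qed.

Lemma dneg_top : dneg fr_top = fr_top.
Proof. unfold dneg. rewrite frame_imp_top_l, frame_imp_self. reflexivity. Qed.

Lemma dneg_b : dneg b = b.
Proof. unfold dneg. rewrite frame_imp_self, frame_imp_top_l. reflexivity. Qed.

Lemma dneg_frame_imp x : dneg (frame_imp x b) = frame_imp x b.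
Proof. apply frame_imp_dneg. Qed.

Definition Regular : Type := { x : E | dneg x = x }.

Lemma regular_eq (x y : Regular) : proj1_sig x = proj1_sig y -> x = y.
Proof. destruct x, y; simpl; intros ->; f_equal; apply proof_irrelevance. Qed.

Lemma regular_ge_b (x : Regular) : fr_le b (proj1_sig x).
Proof. rewrite <- (proj2_sig x). apply frame_imp_ge. Qed.

Definition reg_of (x : E) : Regular := exist _ (dneg x) (dneg_idem x).
Definition reg_le (x y : Regular) : Prop := fr_le (proj1_sig x) (proj1_sig y).
Definition reg_sup (S : Regular -> Prop) : Regular :=
  reg_of (fr_sup (fun z => exists w, S w /\ z = proj1_sig w)).
Definition reg_meet (x y : Regular) : Regular := exist _ (fr_meet (proj1_sig x) (proj1_sig y))
  (eq_trans (dneg_meet _ _) (f_equal2 _ (proj2_sig x) (proj2_sig y))).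
Definition reg_join (x y : Regular) : Regular := reg_sup (fun w => w = x \/ w = y).
Definition reg_top : Regular := exist _ fr_top dneg_top.
Definition reg_bot : Regular := exist _ b dneg_b.
Definition reg_neg (x : Regular) : Regular :=
  exist _ (frame_imp (proj1_sig x) b) (dneg_frame_imp _).

Lemma reg_sup_equiv (S T : Regular -> Prop) : (forall w, S w <-> T w) -> reg_sup S = reg_sup T.
Proof.
  intros Hst. apply regular_eq. simpl. f_equal. apply fr_sup_equiv.
  intros z; split; intros [w [Hw ->]]; exists w; split; auto; apply Hst; auto.
Qed.

Lemma reg_sup_ub (S : Regular -> Prop) (x : Regular) : S x -> reg_le x (reg_sup S).
Proof. intros Hx. eapply fr_trans; [| apply dneg_ext]. apply fr_sup_ub; eauto. Qed.

Lemma reg_sup_least (S : Regular -> Prop) (c : Regular) :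
  (forall x : Regular, S x -> reg_le x c) -> reg_le (reg_sup S) c.
Proof.
  intros Hc. unfold reg_le; simpl. rewrite <- (proj2_sig c). apply dneg_monotone.
  apply fr_sup_least. intros z [w [Hw ->]]. apply Hc; auto.
Qed.

Lemma reg_inf_distr (a : Regular) (S : Regular -> Prop) :
  reg_meet a (reg_sup S) = reg_sup (fun y => exists x : Regular, S x /\ y = reg_meet a x).
Proof.
  apply regular_eq. simpl. rewrite <- (proj2_sig a) at 1.
  rewrite <- dneg_meet, fr_distr. f_equal. apply fr_sup_equiv. intros y; split.
  - intros [x [[w [Hw ->]] ->]]. exists (reg_meet a w); split; [exists w; auto | reflexivity].
  - intros [w [[x [Hx ->]] ->]]. exists (proj1_sig x); split; [exists x; auto | reflexivity].
Qed.

Lemma reg_compl_meet (x : Regular) : reg_meet x (reg_neg x) = reg_bot.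
Proof.
  apply regular_eq. apply fr_antisym; [apply frame_imp_mp |].
  apply fr_meet_univ; [apply regular_ge_b | apply frame_imp_ge].
Qed.

(* The join of x and x -> b has b-negation b, hence its double b-negation is top. *)
Lemma reg_compl_join (x : Regular) : reg_join x (reg_neg x) = reg_top.
Proof.
  apply regular_eq. apply fr_antisym; [apply fr_top_ge |]. simpl.
  set (s := fr_sup _).
  assert (Hs : fr_le (frame_imp s b) b).
  { eapply fr_trans; [| apply (frame_imp_mp (frame_imp (proj1_sig x) b))].
    apply fr_meet_univ; apply frame_imp_antitone; apply fr_sup_ub.
    - exists x; split; auto.
    - exists (reg_neg x); split; auto. }
  unfold dneg. rewrite <- (frame_imp_self b). apply frame_imp_antitone, Hs.
Qed.

Definition regular_CBA : CBA.
Proof.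
  refine {| cb_car := Regular; cb_le := reg_le; cb_meet := reg_meet; cb_join := reg_join;
            cb_top := reg_top; cb_bot := reg_bot; cb_neg := reg_neg; cb_sup := reg_sup |};
    unfold reg_le.
  - intros; apply fr_refl.
  - intros x y z; apply fr_trans.
  - intros x y H1 H2; apply regular_eq, fr_antisym; auto.
  - intros; apply fr_meet_l.
  - intros; apply fr_meet_r.
  - intros; apply fr_meet_univ; auto.
  - intros x y; apply reg_sup_ub; auto.
  - intros x y; apply reg_sup_ub; auto.
  - intros x y c H1 H2; apply reg_sup_least; intros w [-> | ->]; auto.
  - intros; apply fr_top_ge.
  - intros; apply regular_ge_b.
  - intros S x Hx; apply reg_sup_ub; auto.
  - intros S c Hc; apply reg_sup_least; auto.
  - intros x y z. unfold reg_join. rewrite reg_inf_distr. apply reg_sup_equiv.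
    intros w; split; [intros [v [[-> | ->] ->]]; auto | intros [-> | ->]; eauto].
  - apply reg_compl_meet.
  - apply reg_compl_join.
  - apply reg_inf_distr.
Defined.

End Booleanization.

Definition discrete_MT (B : CBA) : MTAlg.
Proof. refine {| mt_cba := B; box := fun x => x |}; auto using cb_refl. Defined.

Definition dneg_open {E : Frame} (b : E) (x : E) : OFrame (discrete_MT (regular_CBA b)) :=
  exist (@is_open (discrete_MT (regular_CBA b))) (reg_of b x) eq_refl.

Lemma dneg_open_hom {E : Frame} (b : E) : frame_hom (dneg_open b).
Proof.
  split; [| split]; intros; apply op_eq, regular_eq; simpl.
  - apply dneg_meet.
  - apply dneg_top.
  - apply fr_antisym.
    + apply dneg_monotone. apply fr_sup_least. intros x Hx.
      eapply fr_trans; [apply dneg_ext |]. apply fr_sup_ub.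
      exists (reg_of b x); split; [| reflexivity].
      exists (dneg_open b x); split; [exists x; auto | reflexivity].
    + rewrite <- (dneg_idem b (fr_sup S)). apply dneg_monotone. apply fr_sup_least.
      intros z [w [[o [[x [Hx ->]] ->]] ->]]. apply dneg_monotone, fr_sup_ub, Hx.
Qed.

Section EpiForward.
Context {M N : MTAlg} {f : M -> N}.
Hypothesis Hf : proximity f.

Lemma MTP_epi_frame_le : MTP_epi f -> forall (E : Frame) (g1 g2 : OFrame N -> E),
  frame_hom g1 -> frame_hom g2 ->
  (forall x, g1 (restrO f (px_open Hf) x) = g2 (restrO f (px_open Hf) x)) ->
  forall y, fr_le (g1 y) (g2 y).
Proof.
  intros Hepi E g1 g2 Hg1 Hg2 Heq y. set (b := g2 y).
  destruct (frame_hom_extends (frame_hom_comp Hg1 (dneg_open_hom b))) as [G1 [HG1 HG1g]].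
  destruct (frame_hom_extends (frame_hom_comp Hg2 (dneg_open_hom b))) as [G2 [HG2 HG2g]].
  assert (HG : forall a, G1 a = G2 a).
  { apply (Hepi _ G1 G2 HG1 HG2). apply (starc_eq_iff_open HG1 HG2 Hf Hf).
    intros u Hu. change (f u) with (proj1_sig (restrO f (px_open Hf) (exist is_open u Hu))).
    rewrite HG1g, HG2g, Heq. reflexivity. }
  assert (Hdneg : dneg b (g1 y) = dneg b b).
  { pose proof (HG (proj1_sig y)) as K. rewrite HG1g, HG2g in K.
    exact (f_equal (fun r : Regular b => proj1_sig r) K). }
  rewrite dneg_b in Hdneg. rewrite <- Hdneg. apply dneg_ext.
Qed.

Lemma frame_epi_of_MTP_epi : MTP_epi f -> frame_epi (restrO f (px_open Hf)).
Proof.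
  intros Hepi E g1 g2 Hg1 Hg2 Heq y.
  apply fr_antisym; apply MTP_epi_frame_le; auto.
Qed.

End EpiForward.

Theorem proposition4p14 (M N : MTAlg) (f : M -> N) (Hf : proximity f) :
  (MTP_iso f <-> frame_iso (restrO f (px_open Hf))) /\
  (MTP_mono f <-> frame_mono (restrO f (px_open Hf))) /\
  (MTP_epi f <-> frame_epi (restrO f (px_open Hf))).
Proof.
  split; [| split; split].
  - apply MTP_iso_iff_frame_iso.
  - apply frame_mono_of_MTP_mono.
  - apply MTP_mono_of_frame_mono.
  - apply frame_epi_of_MTP_epi.
  - apply MTP_epi_of_frame_epi.
Qed.
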